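(* Let $k>0$ be a constant, $p=k/n$, and $G\sim\mathcal{G}(n,p)$ with $m$ its number of edges. For $1\le u\le n$ define $$w_n(u)=\sum_{i=n-u}^{n}\binom{i}{i-(n-u)}(1-p)^{\binom{i-(n-u)}{2}}\,\mathbb{P}\left(m\ge\frac{n^2}{2u}-\frac{n}{2}\right).$$ Let $\lambda>1$ be the solution of $$2\ln 2-(k+1)+\lambda+(\lambda-1)\ln\frac{k}{\lambda-1}=0,$$ or equivalently $\lambda=1+k\left(1+\phi^{-1}\left(\frac{2}{k}\ln 2\right)\right)$ where $\phi(z)=(1+z)\ln(1+z)-z$. Then for any $u\le n/\lambda$, $w_n(u)$ is bounded by a polynomial in $n$.
   Context: $\mathcal{G}(n,p)$ is the binomial random graph on $n$ vertices in which each of the $\binom{n}{2}$ pairs of vertices is an edge with probability $p$, independently. $w_n(u)$ is the paper's bound on the expected number of nodes with potential $u$ in the best-first branch-and-bound search tree for maximum independent set (potential of a partial solution $S\subseteq\{v_1,\dots,v_i\}$ being $|S|+n-i$). *)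

From HB Require Import structures.
From mathcomp Require Import all_boot all_order all_algebra.
From mathcomp Require Import all_classical all_reals.
From mathcomp Require Import exp.
Set Implicit Arguments. Unset Strict Implicit. Unset Printing Implicit Defensive.
Import Order.TTheory GRing.Theory Num.Theory.
Local Open Scope ring_scope.

(* Potential edges of a graph on vertex set 'I_n: unordered pairs {i,j},
   represented as ordered pairs (i, j) with i < j. *)
Definition vpair (n : nat) := {x : 'I_n * 'I_n | (x.1 < x.2)%N}.

Definition graph (n : nat) := {set vpair n}.

Definition Gnp_prob {R : realType} (n : nat) (p : R) (A : pred (graph n)) : R :=
  \sum_(E : graph n | A E) p ^+ #|E| * (1 - p) ^+ (#|{: vpair n}| - #|E|).

Definition prob_edges_ge {R : realType} (n : nat) (p t : R) : R :=
  @Gnp_prob R n p (fun E => t <= (#|E|)%:R).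

Definition w {R : realType} (n u : nat) (p : R) : R :=
  \sum_((n - u)%N <= i < n.+1)
     ('C(i, i - (n - u)))%:R * (1 - p) ^+ 'C(i - (n - u), 2)
     * @prob_edges_ge R n p ((n%:R) ^+ 2 / (2 * u%:R) - n%:R / 2).

From HB Require Import structures.
From mathcomp Require Import all_boot all_order all_algebra.
From mathcomp Require Import all_classical all_reals.
From mathcomp Require Import exp sequences.
From mathcomp Require Import ring lra.
Set Implicit Arguments. Unset Strict Implicit. Unset Printing Implicit Defensive.
Import Order.TTheory GRing.Theory Num.Theory.
Local Open Scope ring_scope.

(* The edge count of G(n, k/n) is binomial with at most n^2/2 trials, so by an
   exponential Markov bound with base r := (lam - 1)/k it reaches n (lam - 1)/2
   with probability at most exp(n^2 p (r - 1)/2 - n (lam - 1) (ln r)/2), which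
   the equation defining lam turns into exactly 2^-n.  For u <= n/lam the
   threshold in w_n(u) is at least n (lam - 1)/2, and each of the at most n + 1
   coefficients of w_n(u) is at most a binomial coefficient C(i, j) <= 2^n with
   i <= n.  Hence w_n(u) <= n + 1. *)

Lemma sum_set_binomial (R : comPzRingType) (T : finType) (a b : R) :
  \sum_(E : {set T}) a ^+ #|E| * b ^+ (#|T| - #|E|) = (a + b) ^+ #|T|.
Proof.
rewrite -prodr_const (@bigA_distr R 0 1 *%R +%R T (fun _ => a) (fun _ => b)).
apply: eq_bigr => E _; rewrite (bigID (mem E)) /=; congr (_ * _).
  by rewrite (eq_bigr (fun _ => a)) ?prodr_const // => i ->.
rewrite (eq_bigr (fun _ => b)); last by move=> i /negbTE ->.
rewrite (eq_bigl (mem (~: E))); last by move=> i; rewrite /= !inE.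
by rewrite prodr_const -(cardsC E) addKn.
Qed.

Lemma bin_le_exp2 i j : ('C(i, j) <= 2 ^ i)%N.
Proof.
elim: i j => [|i IH] [|j] //=; first by rewrite bin0 expn_gt0.
by rewrite binS expnS mul2n -addnn leq_add.
Qed.

Lemma card_vpair_le n : (2 * #|{: vpair n}| <= n * n)%N.
Proof.
pose f (s : vpair n + vpair n) : 'I_n * 'I_n :=
  match s with inl x => val x | inr x => ((val x).2, (val x).1) end.
have f_inj : injective f.
  case=> [[[a b] hab]|[[a b] hab]] [[[c d] hcd]|[[c d] hcd]] //= [] e1 e2; subst.
  - by congr inl; apply: val_inj.
  - by move: hab hcd => /= h1 h2; have := ltn_trans h1 h2; rewrite ltnn.
  - by move: hab hcd => /= h1 h2; have := ltn_trans h1 h2; rewrite ltnn.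
  - by congr inr; apply: val_inj.
have := leq_card f f_inj.
by rewrite card_sum card_prod !card_ord addnn -mul2n.
Qed.

Section EdgeCount.

Variables (R : realType) (n : nat) (p : R).
Hypotheses (p_ge0 : 0 <= p) (p_le1 : p <= 1).

Let N := #|{: vpair n}|.
Let weight (E : graph n) := p ^+ #|E| * (1 - p) ^+ (N - #|E|).

Let weight_ge0 E : 0 <= weight E.
Proof. by rewrite mulr_ge0 // exprn_ge0 // subr_ge0. Qed.

Lemma prob_edges_ge_ge0 t : 0 <= prob_edges_ge n p t.
Proof. by apply: sumr_ge0 => E _; apply: weight_ge0. Qed.

(* Markov's inequality applied to r ^ (#edges), whose mean is (1 + p (r - 1))^N. *)
Lemma prob_edges_ge_chernoff t a r : 1 <= r -> a <= t ->
  prob_edges_ge n p t <= expR (- (a * ln r)) * (1 + p * (r - 1)) ^+ N.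
Proof.
move=> r_ge1 a_le_t; have r_gt0 : 0 < r by apply: lt_le_trans r_ge1.
apply: (@le_trans _ _ (\sum_(E : graph n) weight E * expR ((#|E|%:R - a) * ln r))).
  rewrite [X in _ <= X](bigID (fun E : graph n => t <= #|E|%:R)) /=.
  apply: ler_wpDr; first by apply: sumr_ge0 => E _; rewrite mulr_ge0 ?expR_ge0.
  apply: ler_sum => E tE; apply: ler_peMr; first exact: weight_ge0.
  rewrite -[X in X <= _]expR0 ler_expR mulr_ge0 ?ln_ge0 // subr_ge0.
  exact: le_trans a_le_t tE.
have -> : 1 + p * (r - 1) = p * r + (1 - p) by ring.
rewrite -sum_set_binomial mulr_sumr le_eqVlt; apply/predU1P; left.
apply: eq_bigr => E _.
rewrite mulrBl expRD exprMn expRM_natl lnK ?posrE // /weight; ring.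
Qed.

Lemma prob_edges_ge_le_expR t a r : 1 <= r -> a <= t ->
  prob_edges_ge n p t <= expR (N%:R * (p * (r - 1)) - a * ln r).
Proof.
move=> r_ge1 a_le_t; apply: le_trans (prob_edges_ge_chernoff r_ge1 a_le_t) _.
rewrite [X in _ <= expR X]addrC expRD expRM_natl ler_wpM2l ?expR_ge0 //.
have q_ge0 : 0 <= p * (r - 1) by rewrite mulr_ge0 // subr_ge0.
apply: lerXn2r; rewrite ?nnegrE ?addr_ge0 ?expR_ge0 //.
exact: expR_ge1Dx.
Qed.

Lemma w_le_prob u :
  w n u p <= n.+1%:R * 2 ^+ n * prob_edges_ge n p (n%:R ^+ 2 / (2 * u%:R) - n%:R / 2).
Proof.
set P := prob_edges_ge n p _.
apply: (@le_trans _ _ (\sum_((n - u)%N <= i < n.+1) 2 ^+ n * P)).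
  rewrite /w big_nat [X in _ <= X]big_nat; apply: ler_sum => i /andP[_ i_le_n].
  apply: ler_wpM2r; first exact: prob_edges_ge_ge0.
  apply: (@le_trans _ _ ('C(i, i - (n - u)))%:R).
    by apply: ler_piMr; [exact: ler0n | apply: exprn_ile1; rewrite ?subr_ge0 ?gerBl].
  rewrite -natrX ler_nat; apply: leq_trans (bin_le_exp2 _ _) _.
  by rewrite leq_exp2l.
rewrite sumr_const_nat -[_ *+ _]mulr_natl -mulrA; apply: ler_wpM2r.
  by rewrite mulr_ge0 ?exprn_ge0 ?prob_edges_ge_ge0.
by rewrite ler_nat leq_subr.
Qed.

End EdgeCount.

Lemma edge_threshold_ge (R : realFieldType) (n u : nat) (lam : R) :
  (0 < u)%N -> u%:R * lam <= n%:R ->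
  n%:R * (lam - 1) / 2 <= n%:R ^+ 2 / (2 * u%:R) - n%:R / 2.
Proof.
move=> u_gt0 ulam_le_n; rewrite -(ltr0n R) in u_gt0.
have -> : n%:R ^+ 2 / (2 * u%:R) - n%:R / 2 = n%:R / 2 * (n%:R / u%:R - 1) :> R.
  by field; rewrite gt_eqF.
have : lam <= n%:R / u%:R by rewrite ler_pdivlMr // mulrC.
have : 0 <= n%:R :> R := ler0n _ _.
nra.
Qed.

Lemma prob_edges_ge_le_exp2 (R : realType) (k lam t : R) (n : nat) :
  0 < k -> 1 + k < lam ->
  2 * ln 2 - (k + 1) + lam + (lam - 1) * ln (k / (lam - 1)) = 0 ->
  lam <= n%:R -> n%:R * (lam - 1) / 2 <= t ->
  prob_edges_ge n (k / n%:R) t <= (2 ^+ n)^-1.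
Proof.
move=> k_gt0 lam_gt hlam n_ge_lam a_le_t.
have n_gt0 : 0 < n%:R :> R by lra.
set p := k / n%:R; pose r := (lam - 1) / k.
have p_ge0 : 0 <= p by rewrite divr_ge0 // ltW.
have p_le1 : p <= 1 by rewrite ler_pdivrMr // mul1r; lra.
have r_ge1 : 1 <= r by rewrite ler_pdivlMr // mul1r; lra.
have lnr : (lam - 1) * ln r = 2 * ln 2 + (lam - 1 - k).
  by move: hlam; rewrite /r -invf_div lnV ?posrE ?divr_gt0 //; lra.
apply: le_trans (prob_edges_ge_le_expR n p_ge0 p_le1 r_ge1 a_le_t) _.
rewrite -[2 ^+ n](lnK (_ : 0 < _)) ?posrE ?exprn_gt0 // -expRN ler_expR.
rewrite lnXn // -mulr_natl.
have N_le : #|{: vpair n}|%:R * 2 <= n%:R * n%:R :> R.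
  by rewrite -!natrM ler_nat mulnC card_vpair_le.
have pr : p * (r - 1) * n%:R = lam - 1 - k by rewrite /p /r; field; lra.
have : 0 <= p * (r - 1) by rewrite mulr_ge0 // subr_ge0.
have : n%:R * (lam - 1) / 2 * ln r = n%:R * (2 * ln 2 + (lam - 1 - k)) / 2.
  by rewrite -lnr; ring.
nra.
Qed.

Theorem proposition4 (R : realType) (k lam : R) :
  0 < k ->
  1 + k < lam ->
  2 * ln 2 - (k + 1) + lam + (lam - 1) * ln (k / (lam - 1)) = 0 ->
  exists (C : R) (d : nat), forall n u : nat,
    (1 <= u)%N -> u%:R <= n%:R / lam ->
    w n u (k / n%:R) <= C * (n%:R) ^+ d.
Proof.
move=> k_gt0 lam_gt hlam; exists 2, 1%N => n u u_ge1 u_le.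
have ulam_le_n : u%:R * lam <= n%:R by rewrite -ler_pdivlMr //; lra.
have n_ge_lam : lam <= n%:R.
  have : 1 <= u%:R :> R by rewrite ler1n.
  nra.
have p_ge0 : 0 <= k / n%:R by rewrite divr_ge0 ?ler0n // ltW.
have p_le1 : k / n%:R <= 1 by rewrite ler_pdivrMr ?mul1r; lra.
apply: le_trans (w_le_prob n p_ge0 p_le1 u) _.
rewrite -mulrA; apply: le_trans (ler_wpM2l (ler0n _ _) (_ : _ <= 1)) _.
  rewrite mulrC -ler_pdivlMr ?exprn_gt0 // mul1r.
  exact: prob_edges_ge_le_exp2 (edge_threshold_ge u_ge1 ulam_le_n).
by rewrite mulr1 expr1 -natr1; lra.
Qed.
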